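(* Let $X \subseteq \mathbb{R}^n$ be nonempty, let $g : X \to \mathbb{R}$ be a function that is bounded on $X$ and attains its minimum over $X$ at some $x^\star \in X$. Let $\epsilon \ge 0$, $\delta \ge 0$, and let $x^\star_\epsilon \in X$ be $\epsilon$-optimal for $g$, i.e. $g(x^\star_\epsilon) \le g(x^\star) + \epsilon$. For $\hat c \in \mathbb{R}^n$ define $$\ell^\epsilon_{\mathrm{GEN}}(\hat c) = \sup_{x \in X}\big\{ g(x) - g(x^\star_\epsilon) - \hat c^T (x - x^\star_\epsilon)\big\}.$$ Suppose $\hat c$ satisfies $\ell^\epsilon_{\mathrm{GEN}}(\hat c) \le \delta$. Then every $x \in X$ that minimizes $x \mapsto \hat c^T x$ over $X$ satisfies $g(x) \le g(x^\star) + \epsilon + \delta$.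
   Context: $\ell^\epsilon_{\mathrm{GEN}}$ is a surrogate loss for a predicted linear cost $\hat c$ in which the exact minimizer $x^\star$ of $g$ has been replaced by an approximate minimizer $x^\star_\epsilon$. *)

From HB Require Import structures.
From mathcomp Require Import all_boot all_order all_algebra.
From mathcomp Require Import boolp classical_sets reals constructive_ereal ereal.
Set Implicit Arguments. Unset Strict Implicit. Unset Printing Implicit Defensive.
Import Order.TTheory GRing.Theory Num.Theory.
Local Open Scope ring_scope.
Local Open Scope classical_set_scope.

Definition dotv (R : realType) (n : nat) (c x : 'rV[R]_n) : R :=
  \sum_(i < n) c 0 i * x 0 i.

(* l^eps_GEN(c) = sup_{x in X} { g x - g xe - c^T (x - xe) }, valued in the
   extended reals (the supremum may be +oo when X is unbounded). *)
Definition l_gen (R : realType) (n : nat) (X : set 'rV[R]_n)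
    (g : 'rV[R]_n -> R) (xe c : 'rV[R]_n) : \bar R :=
  ereal_sup [set ((g x - g xe - dotv c (x - xe))%:E) | x in X].

(* Write l for l_gen X g xe c.  Taking x in the supremum gives
   g x - g xe - c^T (x - xe) <= l <= delta, and c^T (x - xe) <= 0 when x
   minimizes c^T over X, so g x <= g xe + delta <= g xstar + eps + delta. *)
From HB Require Import structures.
From mathcomp Require Import all_boot all_order all_algebra.
From mathcomp Require Import boolp classical_sets reals constructive_ereal ereal.
Set Implicit Arguments. Unset Strict Implicit. Unset Printing Implicit Defensive.
Import Order.TTheory GRing.Theory Num.Theory.
Local Open Scope ring_scope.
Local Open Scope classical_set_scope.

Lemma dotvBr (R : realType) (n : nat) (c x y : 'rV[R]_n) :
  dotv c (x - y) = dotv c x - dotv c y.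
Proof. by rewrite /dotv -sumrB; apply: eq_bigr => i _; rewrite !mxE mulrBr. Qed.

Lemma l_gen_ub (R : realType) (n : nat) (X : set 'rV[R]_n)
    (g : 'rV[R]_n -> R) (xe c x : 'rV[R]_n) :
  X x -> ((g x - g xe - dotv c (x - xe))%:E <= l_gen X g xe c)%E.
Proof. by move=> Xx; apply: ereal_sup_ubound; exists x. Qed.

Lemma l_gen_le_argmin (R : realType) (n : nat) (X : set 'rV[R]_n)
    (g : 'rV[R]_n -> R) (xe c x : 'rV[R]_n) (delta : R) :
  (l_gen X g xe c <= delta%:E)%E -> X x -> dotv c x <= dotv c xe ->
  g x <= g xe + delta.
Proof.
move=> l_le Xx cx_le.
have := le_trans (l_gen_ub g xe c Xx) l_le; rewrite lee_fin dotvBr => gap_le.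
rewrite -lerBlDl -(subrK (dotv c x - dotv c xe) (g x - g xe)) -[delta]addr0.
by rewrite lerD // subr_le0.
Qed.

Theorem theorem2 (R : realType) (n : nat) (X : set 'rV[R]_n)
    (g : 'rV[R]_n -> R) (xstar xe c : 'rV[R]_n) (eps delta : R) :
  X !=set0 ->
  (exists M : R, forall x, X x -> `|g x| <= M) ->
  X xstar -> (forall x, X x -> g xstar <= g x) ->
  0 <= eps -> 0 <= delta ->
  X xe -> g xe <= g xstar + eps ->
  (l_gen X g xe c <= delta%:E)%E ->
  forall x, X x -> (forall y, X y -> dotv c x <= dotv c y) ->
    g x <= g xstar + eps + delta.
Proof.
move=> _ _ _ _ _ _ Xe ge_le l_le x Xx x_argmin.
apply: le_trans (l_gen_le_argmin l_le Xx (x_argmin _ Xe)) _.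
by rewrite lerD2r.
Qed.
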